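(* Let sampling data $\{(\mathrm{i}\omega_i, H_i)\}_{i=1}^{N}$ be given, with $\omega_i \in \mathbb{R}$ and $H_i \in \mathbb{C}^{n_o \times n_i}$, closed under conjugation (if $\mathrm{i}\omega_k$ is a sampling frequency then so is $-\mathrm{i}\omega_k$, and the datum at $-\mathrm{i}\omega_k$ is $\overline{H_k}$), and weights $\rho_i > 0$ that are equal for complex conjugate pairs of sampling frequencies. For real matrices $\hat{E}, \hat{A} \in \mathbb{R}^{r\times r}$, $\hat{B} \in \mathbb{R}^{r \times n_i}$, $\hat{C} \in \mathbb{R}^{n_o \times r}$ let $\hat{H}(s) = \hat{C}(s\hat{E} - \hat{A})^{-1}\hat{B}$ and $\mathcal{J}(\hat{H}) = \sum_{i=1}^{N} \rho_i \|H_i - \hat{H}(\mathrm{i}\omega_i)\|_F^2$. Let $\hat{H}$ have the pole-residue form $\hat{H}(s) = \sum_{j=1}^{r} \frac{c_j b_j^{*}}{s - \lambda_j}$ with pairwise distinct poles $\lambda_j$ (where $c_j = \hat{C}\hat{T}e_j$, $b_j = \hat{B}^{T}\hat{S}e_j$ for invertible $\hat{T},\hat{S} \in \mathbb{C}^{r\times r}$ with $\hat{S}^*\hat{E}\hat{T} = I$ and $\hat{S}^*\hat{A}\hat{T} = \operatorname{diag}(\lambda_1,\dots,\lambda_r)$), and let $\hat{H}$ be a local minimum of $\mathcal{J}$. Then for $k = 1, \dots, r$: \begin{align*} \sum_{i=1}^{N} \rho_i \frac{H_i b_k}{-\mathrm{i}\omega_i - \overline{\lambda_k}} &= \sum_{i=1}^{N}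 \rho_i \frac{\hat{H}(\mathrm{i}\omega_i) b_k}{-\mathrm{i}\omega_i - \overline{\lambda_k}},\\ \sum_{i=1}^{N} \rho_i \frac{c_k^{*} H_i}{-\mathrm{i}\omega_i - \overline{\lambda_k}} &= \sum_{i=1}^{N} \rho_i \frac{c_k^{*} \hat{H}(\mathrm{i}\omega_i)}{-\mathrm{i}\omega_i - \overline{\lambda_k}},\\ \sum_{i=1}^{N} \rho_i \frac{c_k^{*} H_i b_k}{(-\mathrm{i}\omega_i - \overline{\lambda_k})^2} &= \sum_{i=1}^{N} \rho_i \frac{c_k^{*} \hat{H}(\mathrm{i}\omega_i) b_k}{(-\mathrm{i}\omega_i - \overline{\lambda_k})^2}. \end{align*}
   Context: $\|\cdot\|_F$ is the Frobenius norm, $(\cdot)^*$ the conjugate transpose, $e_j$ the $j$th standard unit vector. The local minimum is with respect to the real matrices $\hat{E},\hat{A},\hat{B},\hat{C}$ (with $r$ fixed), among those for which $\hat{E}$ is invertible and $\mathrm{i}\omega_i\hat{E} - \hat{A}$ is invertible for all sampling frequencies. *)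

From HB Require Import structures.
From mathcomp Require Import all_boot all_order all_algebra.
From mathcomp Require Import complex.
Set Implicit Arguments. Unset Strict Implicit. Unset Printing Implicit Defensive.
Import Order.TTheory GRing.Theory Num.Theory.
Local Open Scope ring_scope.
Local Open Scope complex_scope.

Section Defs.
Variable R : rcfType.
Local Notation C := (R[i]).

Definition cmx m n (M : 'M[R]_(m, n)) : 'M[C]_(m, n) := map_mx (fun x => x%:C) M.

Definition cconjmx m n (M : 'M[C]_(m, n)) : 'M[C]_(m, n) := map_mx (@conjc R) M.
Definition ctrmx m n (M : 'M[C]_(m, n)) : 'M[C]_(n, m) := (cconjmx M)^T.

Definition sqmod (z : C) : R := (@complex.Re R z) ^+ 2 + (@complex.Im R z) ^+ 2.

Definition frob2 m n (M : 'M[C]_(m, n)) : R := \sum_(a < m) \sum_(b < n) sqmod (M a b).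

Definition tf r ni no (E A : 'M[R]_r) (B : 'M[R]_(r, ni)) (Cm : 'M[R]_(no, r))
  (s : C) : 'M[C]_(no, ni) :=
  cmx Cm *m invmx (s *: cmx E - cmx A) *m cmx B.

Definition iw (w : R) : C := Complex 0 w.

Definition Jcost N ni no (om : 'I_N -> R) (H : 'I_N -> 'M[C]_(no, ni))
  (rho : 'I_N -> R) r (E A : 'M[R]_r) (B : 'M[R]_(r, ni)) (Cm : 'M[R]_(no, r)) : R :=
  \sum_(i < N) rho i * frob2 (H i - tf E A B Cm (iw (om i))).

Definition admissible N (om : 'I_N -> R) r (E A : 'M[R]_r) : Prop :=
  cmx E \in unitmx /\ forall i, (iw (om i) *: cmx E - cmx A) \in unitmx.

(* matrices within distance eps (entrywise max-norm; all norms on a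
   finite-dimensional real space are equivalent) *)
Definition near_mx m n (eps : R) (M M' : 'M[R]_(m, n)) : Prop :=
  forall a b, `|M' a b - M a b| < eps.

Definition local_min_J N ni no (om : 'I_N -> R) (H : 'I_N -> 'M[C]_(no, ni))
  (rho : 'I_N -> R) r (E A : 'M[R]_r) (B : 'M[R]_(r, ni)) (Cm : 'M[R]_(no, r)) : Prop :=
  admissible om E A /\
  exists2 eps : R, 0 < eps &
    forall (E' A' : 'M[R]_r) (B' : 'M[R]_(r, ni)) (C' : 'M[R]_(no, r)),
      near_mx eps E E' -> near_mx eps A A' -> near_mx eps B B' -> near_mx eps Cm C' ->
      admissible om E' A' ->
      Jcost om H rho E A B Cm <= Jcost om H rho E' A' B' C'.
End Defs.

From HB Require Import structures.
From mathcomp Require Import all_boot all_order all_algebra.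
From mathcomp Require Import complex.
From mathcomp Require Import ring lra.
Set Implicit Arguments. Unset Strict Implicit. Unset Printing Implicit Defensive.
Import Order.TTheory GRing.Theory Num.Theory.
Local Open Scope ring_scope.
Local Open Scope complex_scope.

(* At a local minimum, J has zero first variation along every real curve of
   admissible realizations.  Perturbing one entry of C, B or A by t changes
   Hhat(i w_i) by t D_i / (1 - t beta_i) (for A by the Sherman-Morrison
   formula), so -2 sum_i rho_i Re <H_i - Hhat(i w_i), D_i> vanishes; collecting
   all entries, the gradient matrices sum_i rho_i Q_i (H_i - Hhat(i w_i))^* P_i
   have zero real part.  The conjugation symmetry of the data makes them real,
   hence zero.  Projecting them on the k-th left and right eigenvectors of the
   pencil, on which the resolvent acts as 1 / (i w_i - lambda_k), gives the
   three interpolation conditions. *)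

Section QuadraticExpansion.
Variable R : realFieldType.

Definition quad_deriv0 (f : R -> R) (g : R) : Prop :=
  exists2 de : R, 0 < de & exists K : R,
    forall t, `|t| < de -> `|f t - f 0 - t * g| <= K * t ^+ 2.

Lemma eq_quad_deriv0 f1 f2 g : f1 =1 f2 -> quad_deriv0 f1 g -> quad_deriv0 f2 g.
Proof.
by move=> ef [de de_gt0 [K hK]]; exists de => //; exists K => t; rewrite -!ef; apply: hK.
Qed.

Lemma quad_deriv0D f1 f2 g1 g2 : quad_deriv0 f1 g1 -> quad_deriv0 f2 g2 ->
  quad_deriv0 (fun t => f1 t + f2 t) (g1 + g2).
Proof.
move=> [d1 d1_gt0 [K1 h1]] [d2 d2_gt0 [K2 h2]].
exists (Num.min d1 d2); first by rewrite lt_min d1_gt0 d2_gt0.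
exists (K1 + K2) => t; rewrite lt_min => /andP[t1 t2].
have -> : f1 t + f2 t - (f1 0 + f2 0) - t * (g1 + g2)
   = (f1 t - f1 0 - t * g1) + (f2 t - f2 0 - t * g2) by ring.
by rewrite mulrDl; apply: le_trans (ler_normD _ _) (lerD (h1 t t1) (h2 t t2)).
Qed.

Lemma quad_deriv0Z c f g : quad_deriv0 f g -> quad_deriv0 (fun t => c * f t) (c * g).
Proof.
move=> [de de_gt0 [K hK]]; exists de => //; exists (`|c| * K) => t /hK le_fK.
have -> : c * f t - c * f 0 - t * (c * g) = c * (f t - f 0 - t * g) by ring.
by rewrite normrM -mulrA ler_wpM2l.
Qed.

Lemma quad_deriv0_sum (I : Type) (s : seq I) (F : I -> R -> R) (G : I -> R) :
  (forall i, quad_deriv0 (F i) (G i)) ->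
  quad_deriv0 (fun t => \sum_(i <- s) F i t) (\sum_(i <- s) G i).
Proof.
move=> hF; elim: s => [|x s IHs].
  exists 1 => //; exists 0 => t _.
  by rewrite !big_nil !subrr mulr0 subrr normr0 mul0r.
rewrite big_cons; apply: eq_quad_deriv0 (quad_deriv0D (hF x) IHs) => t.
by rewrite big_cons.
Qed.

(* Fermat's rule: step against the sign of [g] by an amount small enough for
   the linear term [t * g] to dominate the quadratic remainder. *)
Lemma local_min_quad_deriv0 f g : quad_deriv0 f g ->
  (exists2 eps : R, 0 < eps & forall t, `|t| < eps -> f 0 <= f t) -> g = 0.
Proof.
move=> [de de_gt0 [K hK]] [eps eps_gt0 fmin].
apply/eqP; apply/negPn/negP => g_neq0.
pose K' := `|K| + 1.
have K'_gt0 : 0 < K' by rewrite /K'; have := normr_ge0 K; lra.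
have g_gt0 : 0 < `|g| by rewrite normr_gt0.
pose m := Num.min (Num.min (de / 2) (eps / 2)) (`|g| / (2 * K')).
have m_gt0 : 0 < m by rewrite /m !lt_min !divr_gt0 // mulr_gt0.
have m_de : m <= de / 2 by rewrite /m !ge_min lexx.
have m_eps : m <= eps / 2 by rewrite /m !ge_min lexx orbT.
have m_g : m * (2 * K') <= `|g|.
  by rewrite -ler_pdivlMr ?mulr_gt0 // /m !ge_min lexx orbT.
pose t := - Num.sg g * m.
have norm_t : `|t| = m by rewrite normrM normrN normr_sg g_neq0 mul1r gtr0_norm.
have tg : t * g = - (m * `|g|) by rewrite /t normrEsg; ring.
have t2 : t ^+ 2 = m ^+ 2 by rewrite -real_normK ?num_real // norm_t.
have f_ge : f 0 <= f t by apply: fmin; rewrite norm_t; lra.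
have rem : f t - f 0 - t * g <= K' * t ^+ 2.
  apply: le_trans (ler_norm _) (le_trans (hK t _) _); first by rewrite norm_t; lra.
  by rewrite t2 ler_wpM2r ?sqr_ge0 // /K' (le_trans (ler_norm K)) ?lerDl.
rewrite tg t2 in rem.
have : 0 < m * `|g| by rewrite mulr_gt0.
nra.
Qed.

End QuadraticExpansion.

Section SquaredModulus.
Variable R : rcfType.
Implicit Types (t : R) (x y z g d b : R[i]).
Local Notation Re := (@complex.Re R).

Lemma sqmod_ge0 z : 0 <= sqmod z.
Proof. by case: z => a b; rewrite /sqmod /=; nra. Qed.

Lemma sqmodM x y : sqmod (x * y) = sqmod x * sqmod y.
Proof. by case: x => a b; case: y => c d; rewrite /sqmod /=; ring. Qed.

Lemma sqmod_real t : sqmod t%:C = t ^+ 2.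
Proof. by rewrite /sqmod /=; ring. Qed.

Lemma sqmodB x y : sqmod (x - y) = sqmod x - 2 * Re (x^* * y) + sqmod y.
Proof. by case: x => a b; case: y => c d; rewrite /sqmod /=; ring. Qed.

Lemma ReD x y : Re (x + y) = Re x + Re y.
Proof. by case: x; case: y. Qed.

Lemma Re_sum (I : Type) (s : seq I) (F : I -> R[i]) :
  Re (\sum_(i <- s) F i) = \sum_(i <- s) Re (F i).
Proof. exact: (big_morph _ ReD). Qed.

Lemma Re_realM t z : Re (t%:C * z) = t * Re z.
Proof. by case: z => a b /=; ring. Qed.

Lemma norm_Re_conjM_le x y : `|Re (x^* * y)| <= (sqmod x + sqmod y) / 2.
Proof.
case: x => a b; case: y => c d; rewrite /sqmod /= ler_norml.
have := sqr_ge0 (a - c); have := sqr_ge0 (b - d).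
have := sqr_ge0 (a + c); have := sqr_ge0 (b + d).
by move=> *; apply/andP; split; nra.
Qed.

Lemma sqmod_one_subM_ge t z : `|t * Re z| <= 1 / 2 -> 1 / 4 <= sqmod (1 - t%:C * z).
Proof. by case: z => a b; rewrite /sqmod /= ler_norml => /andP[h1 h2]; nra. Qed.

Lemma one_subM_neq0 t z : `|t * Re z| <= 1 / 2 -> 1 - t%:C * z != 0.
Proof. by move=> /sqmod_one_subM_ge; apply: contraTneq => ->; rewrite /sqmod /=; lra. Qed.

Lemma sqmod_inv_one_subM_le t z : `|t * Re z| <= 1 / 2 -> sqmod (1 - t%:C * z)^-1 <= 4.
Proof.
move=> tz_small; have := sqmod_one_subM_ge tz_small; have w_neq0 := one_subM_neq0 tz_small.
set w := 1 - _ in w_neq0 *.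
have : sqmod w * sqmod w^-1 = 1 by rewrite -sqmodM divff // /sqmod /=; ring.
by have := sqmod_ge0 w^-1; nra.
Qed.

(* With [w = (1 - t b)^-1] one has [t d w = t d + t^2 d b w] and [|w|^2 <= 4]
   for small [t], which bounds the second-order remainder. *)
Lemma quad_deriv0_sqmod_frac g d b :
  quad_deriv0 (fun t => sqmod (g - t%:C * d / (1 - t%:C * b))) (-2 * Re (g^* * d)).
Proof.
have nb_gt0 : 0 < `|Re b| + 1 by have := normr_ge0 (Re b); lra.
exists (1 / (2 * (`|Re b| + 1))); first by rewrite divr_gt0 // mulr_gt0.
exists (sqmod g + 4 * sqmod (d * b) + 4 * sqmod d) => t.
rewrite ltr_pdivlMr ?mulr_gt0 // => t_small.
have tb_small : `|t * Re b| <= 1 / 2.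
  by rewrite normrM; have := normr_ge0 t; have := normr_ge0 (Re b); nra.
have w_le4 := sqmod_inv_one_subM_le tb_small.
have w_neq0 := one_subM_neq0 tb_small.
have expand : t%:C * d / (1 - t%:C * b)
    = t%:C * d + (t ^+ 2)%:C * (d * b / (1 - t%:C * b)).
  by rewrite rmorphXn /=; field.
set w := (1 - t%:C * b)^-1 in w_le4 expand *.
rewrite (rmorph0 (real_complex R)) !mul0r subr0 sqmodB {1}expand mulrDr ReD.
rewrite mulrCA Re_realM [g^* * (_ * _)]mulrCA Re_realM !sqmodM sqmod_real.
set Re1 := Re (g^* * d); set Re2 := Re (g^* * (d * b * w)).
have -> : sqmod g - 2 * (t * Re1 + t ^+ 2 * Re2) + t ^+ 2 * sqmod d * sqmod w
    - sqmod g - t * (-2 * Re1) = t ^+ 2 * (sqmod d * sqmod w - 2 * Re2) by ring.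
rewrite normrM ger0_norm ?sqr_ge0 // mulrC ler_wpM2r ?sqr_ge0 // ler_norml.
have := norm_Re_conjM_le g (d * b * w); rewrite !sqmodM ler_norml -/Re2.
have := sqmod_ge0 g; have := sqmod_ge0 d; have := sqmod_ge0 w.
have := mulr_ge0 (sqmod_ge0 d) (sqmod_ge0 b).
by move=> *; apply/andP; split; nra.
Qed.

End SquaredModulus.

Section ConjugateMatrices.
Variable R : rcfType.
Local Notation C := R[i].

Lemma cconjmxM m n p (X : 'M[C]_(m, n)) (Y : 'M[C]_(n, p)) :
  cconjmx (X *m Y) = cconjmx X *m cconjmx Y.
Proof. exact: map_mxM. Qed.

Lemma cconjmxZ m n (a : C) (X : 'M[C]_(m, n)) : cconjmx (a *: X) = conjc a *: cconjmx X.
Proof. exact: map_mxZ. Qed.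

Lemma cconjmxB m n (X Y : 'M[C]_(m, n)) : cconjmx (X - Y) = cconjmx X - cconjmx Y.
Proof. exact: map_mxB. Qed.

Lemma cconjmx_sum m n (I : finType) (F : I -> 'M[C]_(m, n)) :
  cconjmx (\sum_i F i) = \sum_i cconjmx (F i).
Proof. exact: map_mx_sum. Qed.

Lemma cconjmxV n (X : 'M[C]_n) : cconjmx (invmx X) = invmx (cconjmx X).
Proof. exact: map_invmx. Qed.

Lemma cconjmx1 n : cconjmx (1%:M : 'M[C]_n) = 1%:M.
Proof. exact: map_mx1. Qed.

Lemma cconjmx_cmx m n (X : 'M[R]_(m, n)) : cconjmx (cmx X) = cmx X.
Proof. by apply/matrixP => i j; rewrite !mxE conjc_real. Qed.

Lemma cconjmx_ctrmx m n (X : 'M[C]_(m, n)) : cconjmx (ctrmx X) = ctrmx (cconjmx X).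
Proof. by apply/matrixP => i j; rewrite !mxE. Qed.

Lemma ctrmxM m n p (X : 'M[C]_(m, n)) (Y : 'M[C]_(n, p)) :
  ctrmx (X *m Y) = ctrmx Y *m ctrmx X.
Proof. by rewrite /ctrmx cconjmxM trmx_mul. Qed.

Lemma ctrmxZ m n (a : C) (X : 'M[C]_(m, n)) : ctrmx (a *: X) = conjc a *: ctrmx X.
Proof. by apply/matrixP => i j; rewrite !mxE rmorphM. Qed.

Lemma ctrmxK m n (X : 'M[C]_(m, n)) : ctrmx (ctrmx X) = X.
Proof. by apply/matrixP => i j; rewrite !mxE conjcK. Qed.

Lemma ctrmx_sum m n (I : finType) (F : I -> 'M[C]_(m, n)) :
  ctrmx (\sum_i F i) = \sum_i ctrmx (F i).
Proof. by rewrite /ctrmx cconjmx_sum raddf_sum. Qed.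

Lemma ctrmx_tr m n (X : 'M[C]_(m, n)) : ctrmx X^T = cconjmx X.
Proof. by apply/matrixP => i j; rewrite !mxE. Qed.

Lemma ctrmx_delta m n (p : 'I_m) (q : 'I_n) :
  ctrmx (delta_mx p q : 'M[C]_(m, n)) = delta_mx q p.
Proof. by apply/matrixP => i j; rewrite !mxE rmorph_nat andbC. Qed.

Lemma cmx_delta m n (p : 'I_m) (q : 'I_n) :
  cmx (delta_mx p q) = delta_mx p q :> 'M[C]_(m, n).
Proof. by apply/matrixP => i j; rewrite !mxE rmorph_nat. Qed.

Lemma cmxD_delta m n (X : 'M[R]_(m, n)) (t : R) p q :
  cmx (X + t *: delta_mx p q) = cmx X + t%:C *: delta_mx p q.
Proof. by rewrite -cmx_delta; apply/matrixP => i j; rewrite !mxE rmorphD rmorphM. Qed.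

Lemma ctrmx0 m n : ctrmx (0 : 'M[C]_(m, n)) = 0.
Proof. by apply/matrixP => i j; rewrite !mxE conjc0. Qed.

Lemma cconjmx_fixed_Re_eq0 m n (W : 'M[C]_(m, n)) :
  cconjmx W = W -> (forall i j, complex.Re (W i j) = 0) -> W = 0.
Proof.
move=> W_real W_Re0; apply/matrixP => i j; have := W_Re0 i j.
move/matrixP/(_ i j): W_real; rewrite !mxE; case: (W i j) => a b [Im_eq] /= ->.
by have -> : b = 0 by lra.
Qed.

Lemma conjc_iw (w : R) : conjc (iw w) = iw (- w).
Proof. by []. Qed.

Lemma conjcM (x y : C) : conjc (x * y) = conjc x * conjc y.
Proof. by case: x => a b; case: y => c d; congr Complex; ring. Qed.

Lemma conjc_inv_iw_subr (w : R) (l : C) : conjc (iw w - l)^-1 = (- iw w - l^*)^-1.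
Proof.
by rewrite conjc_inv; congr (_^-1); case: l => a b; rewrite /iw /=; congr Complex; ring.
Qed.

Lemma sum_conjM_delta m n (X : 'M[C]_(m, n)) p q (P : 'M[C]_(m, p)) (Q : 'M[C]_(q, n))
    (k : 'I_p) (l : 'I_q) :
  \sum_a \sum_b (X a b)^* * (P *m delta_mx k l *m Q) a b = (Q *m ctrmx X *m P) l k.
Proof.
rewrite -(mul_delta_mx (0 : 'I_1)) mulmxA -colE -mulmxA -rowE.
rewrite mxE; apply: eq_bigr => a _; rewrite mxE mulr_suml; apply: eq_bigr => b _.
by rewrite !mxE big_ord1 /col /row !mxE; ring.
Qed.

End ConjugateMatrices.

Section DeltaMatrices.
Variable F : fieldType.

Lemma mulmx1_invmx n (X Y : 'M[F]_n) : X *m Y = 1%:M -> invmx X = Y.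
Proof.
move=> XY1; have [X_unit _] := mulmx1_unit XY1.
by rewrite -[invmx X]mulmx1 -XY1 mulmxA (mulVmx X_unit) mul1mx.
Qed.

Lemma delta_mx_mul_sandwich n (X : 'M[F]_n) p q :
  delta_mx p q *m X *m delta_mx p q = X q p *: delta_mx p q.
Proof.
have mid : delta_mx 0 q *m X *m delta_mx p 0 = (X q p)%:M :> 'M[F]_1.
  by rewrite -rowE -colE [LHS]mx11_scalar !mxE.
rewrite -(mul_delta_mx (0 : 'I_1) p q) !mulmxA -(mulmxA _ (delta_mx 0 q)).
by rewrite -(mulmxA _ _ (delta_mx p 0)) mid mul_mx_scalar -scalemxAl mul_delta_mx.
Qed.

Lemma mulmx_sherman_morrison n (M : 'M[F]_n) p q (t : F) :
  M \in unitmx -> 1 - t * invmx M q p != 0 ->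
  (M - t *: delta_mx p q) *m (invmx M
     + (t / (1 - t * invmx M q p)) *: (invmx M *m delta_mx p q *m invmx M)) = 1%:M.
Proof.
move=> M_unit den_neq0; set c := t / _.
rewrite mulmxDr !mulmxBl (mulmxV M_unit) -!scalemxAl -!scalemxAr !mulmxA.
rewrite (mulmxV M_unit) mul1mx delta_mx_mul_sandwich -scalemxAl !scalerA -scalerBl.
have -> : c - t * (c * invmx M q p) = t by rewrite /c; field.
by rewrite subrK.
Qed.

Lemma diag_mx_mul_delta n (d : 'rV[F]_n) k :
  diag_mx d *m delta_mx k 0 = d 0 k *: (delta_mx k 0 : 'cV_n).
Proof.
apply/matrixP => i j; rewrite mul_diag_mx !mxE.
by case: (eqVneq i k) => [->|]; rewrite /= ?mulr0.
Qed.

End DeltaMatrices.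

Lemma eq_sumZ_sub (K : pzRingType) (V : lmodType K) (I : finType) (a : I -> K)
    (X Y : I -> V) :
  \sum_i a i *: (X i - Y i) = 0 -> \sum_i a i *: X i = \sum_i a i *: Y i.
Proof.
move=> sum_eq0; apply/eqP; rewrite -subr_eq0 -sumrB.
by under eq_bigr do rewrite -scalerBr; rewrite sum_eq0.
Qed.

Section PencilDiagonalization.
Variables (R : rcfType) (r : nat) (E A : 'M[R]_r) (T S : 'M[R[i]]_r) (lam : 'I_r -> R[i]).
Hypotheses (T_unit : T \in unitmx) (hSET : ctrmx S *m cmx E *m T = 1%:M)
  (hSAT : ctrmx S *m cmx A *m T = diag_mx (\row_j lam j)).

Lemma ctrmx_S_unit : ctrmx S \in unitmx.
Proof. by have [] := mulmx1_unit (etrans (mulmxA _ _ _) hSET). Qed.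

Lemma pencil_diag s :
  ctrmx S *m (s *: cmx E - cmx A) *m T = diag_mx (\row_j (s - lam j)).
Proof.
rewrite mulmxBr mulmxBl -scalemxAr -scalemxAl hSET hSAT.
by apply/matrixP => i j; rewrite !mxE; case: eqP; rewrite ?mulr1 ?mulr0 ?subr0.
Qed.

Lemma resolvent_diag s : s *: cmx E - cmx A \in unitmx ->
  invmx (s *: cmx E - cmx A) = T *m diag_mx (\row_j (s - lam j)^-1) *m ctrmx S.
Proof.
move=> M_unit; set M := _ - _ in M_unit *.
have D_unit : diag_mx (\row_j (s - lam j)) \in unitmx.
  by rewrite -pencil_diag !unitmx_mul ctrmx_S_unit M_unit T_unit.
have lam_neq j : s - lam j != 0.
  move: D_unit; rewrite unitmxE det_diag unitfE; apply: contraTneq => s_lam.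
  by rewrite negbK; apply/prodf_eq0; exists j; rewrite // mxE s_lam.
have -> : M = invmx (ctrmx S) *m diag_mx (\row_j (s - lam j)) *m invmx T.
  by rewrite -pencil_diag !mulmxA (mulVmx ctrmx_S_unit) mul1mx (mulmxK T_unit).
have DD : diag_mx (\row_j (s - lam j)) *m diag_mx (\row_j (s - lam j)^-1) = 1%:M.
  rewrite mulmx_diag -diag_const_mx; congr diag_mx.
  by apply/matrixP => i j; rewrite !mxE divff.
apply: mulmx1_invmx; rewrite !mulmxA (mulmxKV T_unit) -(mulmxA (invmx _)) DD.
by rewrite mulmx1 (mulVmx ctrmx_S_unit).
Qed.

Lemma row_mul_resolvent s k : s *: cmx E - cmx A \in unitmx ->
  (delta_mx 0 k : 'rV_r) *m invmx T *m invmx (s *: cmx E - cmx A)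
    = (s - lam k)^-1 *: (delta_mx 0 k *m ctrmx S).
Proof.
move=> M_unit; rewrite resolvent_diag // !mulmxA (mulmxKV T_unit) -rowE row_diag_mx.
by rewrite mxE -scalemxAl.
Qed.

Lemma resolvent_mul_col s k : s *: cmx E - cmx A \in unitmx ->
  invmx (s *: cmx E - cmx A) *m (invmx (ctrmx S) *m (delta_mx k 0 : 'cV_r))
    = (s - lam k)^-1 *: (T *m delta_mx k 0).
Proof.
move=> M_unit; rewrite resolvent_diag // !mulmxA (mulmxK ctrmx_S_unit) -mulmxA.
by rewrite diag_mx_mul_delta mxE scalemxAr.
Qed.

End PencilDiagonalization.

Section FirstVariation.
Variables (R : rcfType) (N ni no r : nat) (om : 'I_N -> R) (H : 'I_N -> 'M[R[i]]_(no, ni))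
  (rho : 'I_N -> R) (E A : 'M[R]_r) (B : 'M[R]_(r, ni)) (Cm : 'M[R]_(no, r)).
Local Notation C := R[i].
Local Notation Re := (@complex.Re R).

Definition Hhat i := tf E A B Cm (iw (om i)).
Definition err i := H i - Hhat i.
Definition res i := invmx (iw (om i) *: cmx E - cmx A).

(* [D] is the first-order change of the transfer function along a real curve
   of admissible realizations; the factor [1 / (1 - t beta_i)] accommodates
   the rank-one update of the resolvent. *)
Definition admissible_direction (D : 'I_N -> 'M[C]_(no, ni)) : Prop :=
  exists (A' : R -> 'M[R]_r) (B' : R -> 'M[R]_(r, ni)) (C' : R -> 'M[R]_(no, r))
         (beta : 'I_N -> C),
  exists2 d0 : R, 0 < d0 & forall t, `|t| < d0 ->
    [/\ forall eps, `|t| < eps ->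
          [/\ near_mx eps A (A' t), near_mx eps B (B' t) & near_mx eps Cm (C' t)],
        admissible om E (A' t) &
        forall i, tf E (A' t) (B' t) (C' t) (iw (om i))
                  = Hhat i + (t%:C / (1 - t%:C * beta i)) *: D i].

Definition err_pairing m m' (P : 'I_N -> 'M[C]_(no, m)) (Q : 'I_N -> 'M[C]_(m', ni)) :=
  \sum_i (rho i)%:C *: (Q i *m ctrmx (err i) *m P i).

Lemma near_mx_refl m n eps (X : 'M[R]_(m, n)) : 0 < eps -> near_mx eps X X.
Proof. by move=> eps_gt0 a b; rewrite subrr normr0. Qed.

Lemma near_mx_add_delta m n eps t (X : 'M[R]_(m, n)) p q :
  `|t| < eps -> near_mx eps X (X + t *: delta_mx p q).
Proof.
move=> t_eps a b; rewrite !mxE addrAC subrr add0r normrM.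
by apply: le_lt_trans t_eps; case: (_ && _); rewrite ?normr1 ?mulr1 ?normr0 ?mulr0.
Qed.

Section LocalMinimum.
Hypothesis hmin : local_min_J om H rho E A B Cm.

Lemma first_variation_eq0 D : admissible_direction D ->
  \sum_i rho i * (\sum_a \sum_b Re ((err i a b)^* * D i a b)) = 0.
Proof.
move=> [A' [B' [C' [beta [d0 d0_gt0 hdir]]]]].
pose f t := \sum_i rho i * frob2 (err i - (t%:C / (1 - t%:C * beta i)) *: D i).
have f_deriv :
    quad_deriv0 f (-2 * \sum_i rho i * (\sum_a \sum_b Re ((err i a b)^* * D i a b))).
  have -> : -2 * \sum_i rho i * (\sum_a \sum_b Re ((err i a b)^* * D i a b))
      = \sum_i rho i * (\sum_a \sum_b -2 * Re ((err i a b)^* * D i a b)).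
    rewrite mulr_sumr; apply: eq_bigr => i _; rewrite mulrCA mulr_sumr; congr (_ * _).
    by apply: eq_bigr => a _; rewrite mulr_sumr.
  apply: quad_deriv0_sum => i; apply: quad_deriv0Z.
  apply: (@eq_quad_deriv0 _ (fun t => \sum_a \sum_b
      sqmod (err i a b - t%:C * D i a b / (1 - t%:C * beta i)))).
    by move=> t; apply: eq_bigr => a _; apply: eq_bigr => b _; rewrite !mxE mulrAC.
  by do 2 apply: quad_deriv0_sum => ?; apply: quad_deriv0_sqmod_frac.
have f_min : exists2 eps : R, 0 < eps & forall t, `|t| < eps -> f 0 <= f t.
  have [eps eps_gt0 Jmin] := hmin.2.
  exists (Num.min eps d0); first by rewrite lt_min eps_gt0 d0_gt0.
  move=> t; rewrite lt_min => /andP[t_eps t_d0].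
  have [near_t adm_t tf_t] := hdir t t_d0; have [nA nB nC] := near_t eps t_eps.
  have -> : f 0 = Jcost om H rho E A B Cm.
    by apply: eq_bigr => i _; rewrite (rmorph0 (real_complex R)) mul0r scale0r subr0.
  have -> : f t = Jcost om H rho E (A' t) (B' t) (C' t).
    by apply: eq_bigr => i _; rewrite tf_t opprD addrA.
  exact: Jmin (near_mx_refl E eps_gt0) nA nB nC adm_t.
have /eqP := local_min_quad_deriv0 f_deriv f_min.
by rewrite mulf_eq0 oppr_eq0 pnatr_eq0 => /eqP.
Qed.

Lemma Re_err_pairing_eq0 m m' (P : 'I_N -> 'M[C]_(no, m)) (Q : 'I_N -> 'M[C]_(m', ni)) p q :
  admissible_direction (fun i => P i *m delta_mx p q *m Q i) ->
  Re (err_pairing P Q q p) = 0.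
Proof.
move=> /first_variation_eq0 <-; rewrite summxE Re_sum; apply: eq_bigr => i _.
rewrite mxE Re_realM -sum_conjM_delta Re_sum; congr (_ * _).
by apply: eq_bigr => a _; rewrite Re_sum.
Qed.

End LocalMinimum.

Section Directions.
Hypothesis hadm : admissible om E A.

Lemma admissible_direction_C p q :
  admissible_direction (fun i => 1%:M *m delta_mx p q *m (res i *m cmx B)).
Proof.
exists (fun _ => A), (fun _ => B), (fun t => Cm + t *: delta_mx p q), (fun _ => 0).
exists 1 => // t _; split=> // [eps t_eps|i].
  have eps_gt0 := le_lt_trans (normr_ge0 t) t_eps.
  by split; [exact: near_mx_refl | exact: near_mx_refl | exact: near_mx_add_delta].
rewrite /tf cmxD_delta !mulmxDl -!scalemxAl.
by rewrite mulr0 subr0 divr1 mul1mx !mulmxA.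
Qed.

Lemma admissible_direction_B p q :
  admissible_direction (fun i => (cmx Cm *m res i) *m delta_mx p q *m 1%:M).
Proof.
exists (fun _ => A), (fun t => B + t *: delta_mx p q), (fun _ => Cm), (fun _ => 0).
exists 1 => // t _; split=> // [eps t_eps|i].
  have eps_gt0 := le_lt_trans (normr_ge0 t) t_eps.
  by split; [exact: near_mx_refl | exact: near_mx_add_delta | exact: near_mx_refl].
rewrite /tf cmxD_delta !mulmxDr -!scalemxAr.
by rewrite mulr0 subr0 divr1 mulmx1.
Qed.

(* Perturbing [A] changes the resolvent by a rank-one update, which stays
   invertible as long as [|t * Re (res i q p)| <= 1/2] for every [i]. *)
Lemma admissible_direction_A p q :
  admissible_direction (fun i => (cmx Cm *m res i) *m delta_mx p q *m (res i *m cmx B)).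
Proof.
pose S := \sum_i `|Re (res i q p)|.
have S_ge0 : 0 <= S by apply: sumr_ge0.
have S1_gt0 : 0 < 2 * (S + 1) by rewrite mulr_gt0 //; lra.
exists (fun t => A + t *: delta_mx p q), (fun _ => B), (fun _ => Cm), (fun i => res i q p).
exists (1 / (2 * (S + 1))); first by rewrite divr_gt0.
move=> t t_small.
have den_neq0 i : 1 - t%:C * res i q p != 0.
  apply: one_subM_neq0.
  have : `|Re (res i q p)| <= S by rewrite /S (bigD1 i) //= lerDl sumr_ge0.
  move: t_small; rewrite ltr_pdivlMr // normrM.
  by have := normr_ge0 t; have := normr_ge0 (Re (res i q p)); nra.
have pencil_t i : iw (om i) *: cmx E - cmx (A + t *: delta_mx p q)
    = (iw (om i) *: cmx E - cmx A) - t%:C *: delta_mx p q.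
  by rewrite cmxD_delta opprD addrA.
have sm i := mulmx_sherman_morrison (hadm.2 i) (den_neq0 i).
split=> [eps t_eps | | i].
- have eps_gt0 := le_lt_trans (normr_ge0 t) t_eps.
  by split; [exact: near_mx_add_delta | exact: near_mx_refl | exact: near_mx_refl].
- split=> [|i]; first exact: hadm.1.
  by rewrite pencil_t; have [] := mulmx1_unit (sm i).
- rewrite /tf pencil_t (mulmx1_invmx (sm i)) mulmxDr mulmxDl -scalemxAr -scalemxAl.
  by rewrite !mulmxA.
Qed.

End Directions.

Section ConjugateData.
Variable pi : 'I_N -> 'I_N.
Hypotheses (om_inj : injective om)
  (hpi : forall i, [/\ om (pi i) = - om i, H (pi i) = cconjmx (H i) & rho (pi i) = rho i]).

Lemma conj_index_inj : injective pi.
Proof.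
move=> i j /(congr1 om); have [-> _ _] := hpi i; have [-> _ _] := hpi j.
by move/oppr_inj/om_inj.
Qed.

Lemma cconjmx_res i : cconjmx (res i) = res (pi i).
Proof.
have [om_pi _ _] := hpi i.
by rewrite cconjmxV cconjmxB cconjmxZ !cconjmx_cmx conjc_iw -om_pi.
Qed.

Lemma cconjmx_err i : cconjmx (err i) = err (pi i).
Proof.
have [_ H_pi _] := hpi i.
by rewrite cconjmxB -H_pi /Hhat /tf !cconjmxM cconjmx_res !cconjmx_cmx.
Qed.

Lemma cconjmx_err_pairing m m' (P : 'I_N -> 'M[C]_(no, m)) (Q : 'I_N -> 'M[C]_(m', ni)) :
  (forall i, cconjmx (P i) = P (pi i)) -> (forall i, cconjmx (Q i) = Q (pi i)) ->
  cconjmx (err_pairing P Q) = err_pairing P Q.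
Proof.
move=> P_pi Q_pi; rewrite cconjmx_sum [RHS](reindex_inj conj_index_inj).
apply: eq_bigr => i _; have [_ _ rho_pi] := hpi i.
by rewrite cconjmxZ conjc_real !cconjmxM cconjmx_ctrmx cconjmx_err P_pi Q_pi rho_pi.
Qed.

Hypothesis hmin : local_min_J om H rho E A B Cm.

Lemma err_pairing_eq0 m m' (P : 'I_N -> 'M[C]_(no, m)) (Q : 'I_N -> 'M[C]_(m', ni)) :
  (forall i, cconjmx (P i) = P (pi i)) -> (forall i, cconjmx (Q i) = Q (pi i)) ->
  (forall p q, admissible_direction (fun i => P i *m delta_mx p q *m Q i)) ->
  err_pairing P Q = 0.
Proof.
move=> P_pi Q_pi dir; apply: cconjmx_fixed_Re_eq0; first exact: cconjmx_err_pairing.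
by move=> q p; apply: Re_err_pairing_eq0.
Qed.

Lemma cconjmx_Cres i : cconjmx (cmx Cm *m res i) = cmx Cm *m res (pi i).
Proof. by rewrite cconjmxM cconjmx_cmx cconjmx_res. Qed.

Lemma cconjmx_resB i : cconjmx (res i *m cmx B) = res (pi i) *m cmx B.
Proof. by rewrite cconjmxM cconjmx_cmx cconjmx_res. Qed.

Lemma err_pairing_C_eq0 : err_pairing (fun _ => 1%:M) (fun i => res i *m cmx B) = 0.
Proof.
apply: err_pairing_eq0 => [i|i|p q]; rewrite ?cconjmx1 ?cconjmx_resB //.
exact: (admissible_direction_C hmin.1 p q).
Qed.

Lemma err_pairing_B_eq0 : err_pairing (fun i => cmx Cm *m res i) (fun _ => 1%:M) = 0.
Proof.
apply: err_pairing_eq0 => [i|i|p q]; rewrite ?cconjmx1 ?cconjmx_Cres //.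
exact: (admissible_direction_B hmin.1 p q).
Qed.

Lemma err_pairing_A_eq0 :
  err_pairing (fun i => cmx Cm *m res i) (fun i => res i *m cmx B) = 0.
Proof.
apply: err_pairing_eq0 => [i|i|p q]; rewrite ?cconjmx_Cres ?cconjmx_resB //.
exact: (admissible_direction_A hmin.1 p q).
Qed.

Section Interpolation.
Variables (T S : 'M[C]_r) (lam : 'I_r -> C) (k : 'I_r).
Hypotheses (T_unit : T \in unitmx) (hSET : ctrmx S *m cmx E *m T = 1%:M)
  (hSAT : ctrmx S *m cmx A *m T = diag_mx (\row_j lam j)).

Local Notation c := (cmx Cm *m T *m (delta_mx k 0 : 'cV_r)).
Local Notation b := ((cmx B)^T *m S *m (delta_mx k 0 : 'cV_r)).
Local Notation d i := (- iw (om i) - (lam k)^*).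
Local Notation u := ((delta_mx 0 k : 'rV_r) *m invmx T).
Local Notation v := (invmx (ctrmx S) *m (delta_mx k 0 : 'cV_r)).

Let row_mul_res i : u *m res i = (iw (om i) - lam k)^-1 *: (delta_mx 0 k *m ctrmx S).
Proof. exact: (row_mul_resolvent T_unit hSET hSAT k (hmin.1.2 i)). Qed.

Let res_mul_col i : res i *m v = (iw (om i) - lam k)^-1 *: (T *m delta_mx k 0).
Proof. exact: (resolvent_mul_col T_unit hSET hSAT k (hmin.1.2 i)). Qed.

Let ctrmx_b : ctrmx b = (delta_mx 0 k : 'rV_r) *m ctrmx S *m cmx B.
Proof. by rewrite !ctrmxM ctrmx_delta ctrmx_tr cconjmx_cmx mulmxA. Qed.

Let conjc_weight i :
  conjc ((rho i)%:C * (iw (om i) - lam k)^-1) = (rho i)%:C / d i.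
Proof. by rewrite conjcM conjc_real conjc_inv_iw_subr. Qed.

Lemma right_tangential_interpolation :
  \sum_i ((rho i)%:C / d i) *: (H i *m b)
  = \sum_i ((rho i)%:C / d i) *: (Hhat i *m b).
Proof.
apply: eq_sumZ_sub.
transitivity (ctrmx (u *m err_pairing (fun _ => 1%:M) (fun i => res i *m cmx B))).
  rewrite mulmx_sumr ctrmx_sum; apply: eq_bigr => i _.
  rewrite -mulmxBl -scalemxAr mulmx1 !mulmxA row_mul_res -!scalemxAl scalerA ctrmxZ.
  by rewrite conjc_weight ctrmxM ctrmxK -ctrmx_b ctrmxK !mulmxA.
by rewrite err_pairing_C_eq0 mulmx0 ctrmx0.
Qed.

Lemma left_tangential_interpolation :
  \sum_i ((rho i)%:C / d i) *: (ctrmx c *m H i)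
  = \sum_i ((rho i)%:C / d i) *: (ctrmx c *m Hhat i).
Proof.
apply: eq_sumZ_sub.
transitivity (ctrmx (err_pairing (fun i => cmx Cm *m res i) (fun _ => 1%:M) *m v)).
  rewrite mulmx_suml ctrmx_sum; apply: eq_bigr => i _.
  rewrite -mulmxBr -scalemxAl mul1mx -!mulmxA res_mul_col -!scalemxAr scalerA ctrmxZ.
  by rewrite conjc_weight !ctrmxM ctrmxK.
by rewrite err_pairing_B_eq0 mul0mx ctrmx0.
Qed.

Lemma bitangential_interpolation :
  \sum_i ((rho i)%:C / d i ^+ 2) *: (ctrmx c *m H i *m b)
  = \sum_i ((rho i)%:C / d i ^+ 2) *: (ctrmx c *m Hhat i *m b).
Proof.
apply: eq_sumZ_sub.
transitivity
  (ctrmx (u *m err_pairing (fun i => cmx Cm *m res i) (fun i => res i *m cmx B) *m v)).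
  rewrite mulmx_sumr mulmx_suml ctrmx_sum; apply: eq_bigr => i _.
  rewrite -mulmxBl -mulmxBr -scalemxAr -scalemxAl.
  have -> : u *m (res i *m cmx B *m ctrmx (err i) *m (cmx Cm *m res i)) *m v
      = u *m res i *m cmx B *m ctrmx (err i) *m cmx Cm *m (res i *m v) by rewrite !mulmxA.
  rewrite row_mul_res res_mul_col -!scalemxAl -scalemxAr !scalerA ctrmxZ conjcM.
  rewrite conjc_weight conjc_inv_iw_subr -mulrA -invfM -expr2 -ctrmx_b.
  by rewrite !ctrmxM !ctrmxK !mulmxA.
by rewrite err_pairing_A_eq0 mulmx0 mul0mx ctrmx0.
Qed.

End Interpolation.
End ConjugateData.
End FirstVariation.

Unset Implicit Arguments.

Theorem theorem4p1 (R : rcfType) (N ni no r : nat)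
  (om : 'I_N -> R) (H : 'I_N -> 'M[R[i]]_(no, ni)) (rho : 'I_N -> R)
  (* distinct sampling frequencies *)
  (om_inj : injective om)
  (* closure under conjugation, with equal weights on conjugate pairs *)
  (hconj : forall k, exists k' : 'I_N,
      [/\ om k' = - om k, H k' = cconjmx (H k) & rho k' = rho k])
  (rho_pos : forall i, 0 < rho i)
  (E A : 'M[R]_r) (B : 'M[R]_(r, ni)) (Cm : 'M[R]_(no, r))
  (T S : 'M[R[i]]_r) (lam : 'I_r -> R[i])
  (T_unit : T \in unitmx) (S_unit : S \in unitmx)
  (hSET : ctrmx S *m cmx E *m T = 1%:M)
  (hSAT : ctrmx S *m cmx A *m T = diag_mx (\row_j lam j))
  (lam_inj : injective lam)
  (hmin : local_min_J om H rho E A B Cm) :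
  let c (k : 'I_r) : 'cV[R[i]]_no := cmx Cm *m T *m delta_mx k 0 in
  let b (k : 'I_r) : 'cV[R[i]]_ni := (cmx B)^T *m S *m delta_mx k 0 in
  let Hh (i : 'I_N) := tf E A B Cm (iw (om i)) in
  let d (i : 'I_N) (k : 'I_r) : R[i] := - iw (om i) - (lam k)^* in
  forall k : 'I_r,
  [/\ \sum_(i < N) ((rho i)%:C / d i k) *: (H i *m b k)
        = \sum_(i < N) ((rho i)%:C / d i k) *: (Hh i *m b k),
      \sum_(i < N) ((rho i)%:C / d i k) *: (ctrmx (c k) *m H i)
        = \sum_(i < N) ((rho i)%:C / d i k) *: (ctrmx (c k) *m Hh i) &
      \sum_(i < N) ((rho i)%:C / d i k ^+ 2) *: (ctrmx (c k) *m H i *m b k)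
        = \sum_(i < N) ((rho i)%:C / d i k ^+ 2) *: (ctrmx (c k) *m Hh i *m b k)].
Proof.
move=> c b Hh d k.
have [pi hpi] := fin_all_exists hconj.
split.
- exact: (right_tangential_interpolation om_inj hpi hmin k T_unit hSET hSAT).
- exact: (left_tangential_interpolation om_inj hpi hmin k T_unit hSET hSAT).
- exact: (bitangential_interpolation om_inj hpi hmin k T_unit hSET hSAT).
Qed.
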